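(* Let $X$ be a locally compact separable metrizable space, $Z\subseteq X$ compact, and let $\mathcal U=(\mathfrak P,\{\mathcal U_{\mathfrak p}\},\{\Phi_{\mathfrak p\mathfrak q}\})$ be an abstract good coordinate system of $Z$ in the strong sense, with $\mathcal U_{\mathfrak p}=(U_{\mathfrak p},S_{\mathfrak p},\psi_{\mathfrak p})$. Let $|\mathcal U|=(\coprod_{\mathfrak p}U_{\mathfrak p})/\sim$ with the quotient topology. For each $\mathfrak p$ choose an open $U'_{\mathfrak p}\Subset U_{\mathfrak p}$ and denote also by $U'_{\mathfrak p}$ its image under the natural map $U_{\mathfrak p}\to|\mathcal U|$. Then $U'=\bigcup_{\mathfrak p\in\mathfrak P}U'_{\mathfrak p}\subseteq|\mathcal U|$, equipped with the subspace topology induced from $|\mathcal U|$, is separable and metrizable.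
   Context: An abstract K-chart of $X$ is a triple $(U,S,\psi)$ where $U$ is a locally compact separable metrizable space, $S\subseteq U$ is closed, and $\psi:S\to X$ is a homeomorphism onto an open subset of $X$. Given abstract K-charts $\mathcal U_i=(U_i,S_i,\psi_i)$ ($i=1,2$), a coordinate change from $\mathcal U_1$ to $\mathcal U_2$ is a pair $(U_{21},\varphi_{21})$ with: (1) $U_{21}\subseteq U_1$ open; (2) $\varphi_{21}:U_{21}\to U_2$ a topological embedding; (3) $S_1\cap U_{21}=\varphi_{21}^{-1}(S_2)$ and $\psi_2\circ\varphi_{21}=\psi_1$ on $S_1\cap U_{21}$; (4) $\psi_1(S_1\cap U_{21})=\psi_1(S_1)\cap\psi_2(S_2)$. An abstract good coordinate system of $Z$ in the weak sense is $(\mathfrak P,\{\mathcal U_{\mathfrak p}\},\{\Phi_{\mathfrak p\mathfrak q}\})$ where: (1) $\mathfrak P$ is a finite partially ordered set; (2) each $\mathcal U_{\mathfrak p}=(U_{\mathfrak p},S_{\mathfrak p},\psi_{\mathfrak p})$ is an abstract K-chart; (3) for $\mathfrak q\le\mathfrak p$, $\Phi_{\mathfrak p\mathfrak q}=(U_{\mathfrak p\mathfrak q},\varphi_{\mathfrak p\mathfrak q})$ is a coordinate change from $\mathcal U_{\mathfrak q}$ to $\mathcal U_{\mathfrak p}$, with $U_{\mathfrak p\mathfrak p}=U_{\mathfrak p}$ and $\varphi_{\mathfrak p\mathfrak p}=\mathrm{id}$; (4) if $\mathfrak r\le\mathfrak q\le\mathfrak p$ then $\varphi_{\mathfrak p\mathfrak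 r}=\varphi_{\mathfrak p\mathfrak q}\circ\varphi_{\mathfrak q\mathfrak r}$ on $\varphi_{\mathfrak q\mathfrak r}^{-1}(U_{\mathfrak p\mathfrak q})\cap U_{\mathfrak p\mathfrak r}$; (5) if $\psi_{\mathfrak p}(S_{\mathfrak p})\cap\psi_{\mathfrak q}(S_{\mathfrak q})\neq\emptyset$ then $\mathfrak p\le\mathfrak q$ or $\mathfrak q\le\mathfrak p$; (6) $\bigcup_{\mathfrak p}\psi_{\mathfrak p}(S_{\mathfrak p})\supseteq Z$. On $\coprod_{\mathfrak p}U_{\mathfrak p}$ define a relation $\sim$: for $x\in U_{\mathfrak p}$, $y\in U_{\mathfrak q}$, $x\sim y$ iff (a) $\mathfrak p=\mathfrak q$ and $x=y$, or (b) $\mathfrak p\le\mathfrak q$, $x\in U_{\mathfrak q\mathfrak p}$ and $y=\varphi_{\mathfrak q\mathfrak p}(x)$, or (c) $\mathfrak q\le\mathfrak p$, $y\in U_{\mathfrak p\mathfrak q}$ and $x=\varphi_{\mathfrak p\mathfrak q}(y)$. The system is an abstract good coordinate system of $Z$ in the strong sense if it is one in the weak sense and moreover $\sim$ is an equivalence relation and the quotient $(\coprod_{\mathfrak p}U_{\mathfrak p})/\sim$ with the quotient topology is Hausdorff. For an open subset $V$ of a separable metrizable space $U$, $V\Subset U$ means the closure of $V$ in $U$ is compact. *)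

From HB Require Import structures.
From mathcomp Require Import all_boot all_order all_algebra.
From mathcomp Require Import all_classical all_reals.
From mathcomp Require Import topology normedtype.
From mathcomp Require Import Rstruct Rstruct_topology.
From Stdlib Require Import Rdefinitions.

Set Implicit Arguments.
Unset Strict Implicit.
Unset Printing Implicit Defensive.
Import Order.TTheory GRing.Theory Num.Theory.
Local Open Scope classical_set_scope.

(* [tau] is the family of open sets of a topology on [T]; [A] is a subset of [T]
   carrying the subspace topology. *)

Definition rel_open {T : Type} (tau : set (set T)) (A W : set T) : Prop :=
  exists O, tau O /\ W = A `&` O.

Definition separable_in {T : Type} (tau : set (set T)) (A : set T) : Prop :=
  exists D : set T, D `<=` A /\ countable D /\
    forall W, rel_open tau A W -> W !=set0 -> (W `&` D) !=set0.

Definition metrizable_in {T : Type} (tau : set (set T)) (A : set T) : Prop :=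
  exists d : T -> T -> Rdefinitions.R,
    (forall x y, A x -> A y -> (0 <= d x y)%R) /\
    (forall x y, A x -> A y -> d x y = 0%R <-> x = y) /\
    (forall x y, A x -> A y -> d x y = d y x) /\
    (forall x y z, A x -> A y -> A z -> (d x z <= d x y + d y z)%R) /\
    (forall W, W `<=` A ->
       (rel_open tau A W <->
        forall x, W x -> exists2 e : Rdefinitions.R, (0 < e)%R &
                    [set y | A y /\ (d x y < e)%R] `<=` W)).

Definition hausdorff_in {T : Type} (tau : set (set T)) (A : set T) : Prop :=
  forall a b, A a -> A b -> a <> b ->
    exists O1 O2, tau O1 /\ tau O2 /\ O1 a /\ O2 b /\ A `&` O1 `&` O2 = set0.

Definition lcsm (X : topologicalType) : Prop :=
  locally_compact [set: X] /\ separable_in (@open X) setT /\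
  metrizable_in (@open X) setT.

Definition embedding_on {S T : topologicalType} (A : set S) (f : S -> T) : Prop :=
  {in A &, injective f} /\ {within A, continuous f} /\
  (forall O : set S, open O -> exists V : set T, open V /\ f @` (A `&` O) = f @` A `&` V).

Definition K_chart {X U : topologicalType} (S : set U) (psi : U -> X) : Prop :=
  lcsm U /\ closed S /\ embedding_on S psi /\ open (psi @` S).

Definition coord_change {X U1 U2 : topologicalType}
  (S1 : set U1) (psi1 : U1 -> X) (S2 : set U2) (psi2 : U2 -> X)
  (U21 : set U1) (phi21 : U1 -> U2) : Prop :=
  open U21 /\ embedding_on U21 phi21 /\
  S1 `&` U21 = U21 `&` phi21 @^-1` S2 /\
  (forall x, S1 x -> U21 x -> psi2 (phi21 x) = psi1 x) /\
  psi1 @` (S1 `&` U21) = psi1 @` S1 `&` psi2 @` S2.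

Unset Implicit Arguments.
Section GCS.
Context (X : topologicalType) (disp : Order.disp_t) (P : finPOrderType disp)
  (U : P -> topologicalType) (S : forall p, set (U p)) (psi : forall p, U p -> X)
  (Ud : forall p q : P, set (U q))        (* Ud p q = U_{pq} ⊆ U_q *)
  (phi : forall p q : P, U q -> U p).     (* phi p q = phi_{pq} : U_{pq} -> U_p *)

Definition gcs_weak (Z : set X) : Prop :=
  (forall p : P, K_chart (S p) (psi p)) /\
  (forall p q : P, (q <= p)%O ->
      coord_change (S q) (psi q) (S p) (psi p) (Ud p q) (phi p q)) /\
  (forall p, Ud p p = setT /\ phi p p = id) /\
  (forall p q r : P, (r <= q)%O -> (q <= p)%O ->
      forall x, Ud q r x -> Ud p q (phi q r x) -> Ud p r x ->
        phi p r x = phi p q (phi q r x)) /\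
  (forall p q : P, (psi p @` S p `&` psi q @` S q) !=set0 ->
      (p <= q)%O \/ (q <= p)%O) /\
  Z `<=` \bigcup_(p in [set: P]) (psi p @` S p).

Definition gcs_rel (x y : {p : P & U p}) : Prop :=
  x = y \/
  ((projT1 x <= projT1 y)%O /\ Ud (projT1 y) (projT1 x) (projT2 x) /\
     projT2 y = phi (projT1 y) (projT1 x) (projT2 x)) \/
  ((projT1 y <= projT1 x)%O /\ Ud (projT1 x) (projT1 y) (projT2 y) /\
     projT2 x = phi (projT1 x) (projT1 y) (projT2 y)).

(* the point of |U| represented by x : its ~-class *)
Definition gcs_cls (x : {p : P & U p}) : set {p : P & U p} := [set y | gcs_rel x y].

(* the carrier of |U| : the set of classes *)
Definition gcs_quot : set (set {p : P & U p}) := range gcs_cls.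

(* quotient topology: O is open iff its preimage in every U_p is open
   (relevant only through O `&` gcs_quot) *)
Definition gcs_qopen (O : set (set {p : P & U p})) : Prop :=
  forall p : P, open [set a : U p | O (gcs_cls (existT _ p a))].

Definition is_equivalence {T : Type} (r : T -> T -> Prop) : Prop :=
  (forall x, r x x) /\ (forall x y, r x y -> r y x) /\
  (forall x y z, r x y -> r y z -> r x z).

Definition gcs_strong (Z : set X) : Prop :=
  gcs_weak Z /\ is_equivalence gcs_rel /\ hausdorff_in gcs_qopen gcs_quot.

Definition gcs_union_image (U' : forall p, set (U p)) : set (set {p : P & U p}) :=
  \bigcup_(p in [set: P]) [set gcs_cls (existT _ p a) | a in U' p].

End GCS.

(* The closures of the U'_p are compact, so their images form a compact subset
   K of |U|, which is Hausdorff. In each U_p take the closed balls of radius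
   1/(m+1) around the points of a countable dense set: their images are closed
   in K, and every neighbourhood of a point of K contains one of them around
   that point. Urysohn functions for the disjoint pairs among these countably
   many closed sets separate the points of K, hence embed K into the Hilbert
   cube; so K, and with it U' inside K, is metrizable. Separability of U' is
   pushed forward from the dense sets of the U_p along the continuous maps
   U_p -> |U|. *)

From HB Require Import structures.
From mathcomp Require Import all_boot all_order all_algebra.
From mathcomp Require Import all_classical all_reals.
From mathcomp Require Import topology normedtype.
From mathcomp Require Import Rstruct ring lra.
Import Order.TTheory GRing.Theory Num.Theory.
Import numFieldNormedType.Exports.
Local Open Scope classical_set_scope.
Local Open Scope ring_scope.

Definition network {T : topologicalType} {I : Type} (N : I -> set T) (A : set T) :=
  forall x O, A x -> open O -> O x -> exists i, N i x /\ N i `<=` O.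

Definition metric_inducing {R : realType} {T : topologicalType} (d : T -> T -> R) :=
  [/\ forall x y, 0 <= d x y, forall x y, d x y = 0 <-> x = y,
      forall x y, d x y = d y x, forall x y z, d x z <= d x y + d y z &
      forall W : set T,
        open W <-> forall x, W x -> exists2 e, 0 < e & [set y | d x y < e] `<=` W].

Section separating_sequence.
Context {R : realType} {T : topologicalType} (f : nat -> T -> R).
Hypotheses (f_cont : forall n, continuous (f n)) (f01 : forall n x, 0 <= f n x <= 1)
  (f_sep : forall x y, x <> y -> exists n, f n x = 0 /\ f n y = 1).

Definition sep_term x y n := `|f n x - f n y| / n.+1%:R.
Definition sep_dist x y := sup (range (sep_term x y)).

Lemma sep_term_ge0 x y n : 0 <= sep_term x y n.
Proof. by rewrite divr_ge0. Qed.

Lemma sep_term_le_norm x y n : sep_term x y n <= `|f n x - f n y|.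
Proof. by rewrite ler_pdivrMr ?ltr0Sn // ler_peMr // ler1n. Qed.

Lemma sep_term_le_inv x y n : sep_term x y n <= n.+1%:R^-1.
Proof.
rewrite -[leRHS]mul1r ler_wpM2r ?invr_ge0 //.
have /andP[? ?] := f01 n x; have /andP[? ?] := f01 n y.
by rewrite ler_norml; apply/andP; split; lra.
Qed.

Lemma sep_term_le_dist x y n : sep_term x y n <= sep_dist x y.
Proof.
apply: ub_le_sup; last by exists n.
exists 1 => _ [m _ <-]; apply: le_trans (sep_term_le_inv x y m) _.
by rewrite invf_le1 ?ltr0Sn // ler1n.
Qed.

Lemma sep_dist_le x y c : (forall n, sep_term x y n <= c) -> sep_dist x y <= c.
Proof. by move=> h; apply: ge_sup; [exists (sep_term x y 0), 0%N | move=> _ [n _ <-]]. Qed.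

Lemma sep_dist_ge0 x y : 0 <= sep_dist x y.
Proof. exact: le_trans (sep_term_ge0 x y 0) (sep_term_le_dist x y 0). Qed.

Lemma sep_dist_sym x y : sep_dist x y = sep_dist y x.
Proof.
by apply/eqP; rewrite eq_le !sep_dist_le // => n; rewrite /sep_term distrC sep_term_le_dist.
Qed.

Lemma sep_dist_triangle x y z : sep_dist x z <= sep_dist x y + sep_dist y z.
Proof.
apply: sep_dist_le => n; apply: le_trans (lerD (sep_term_le_dist x y n) (sep_term_le_dist y z n)).
rewrite /sep_term -mulrDl ler_wpM2r ?invr_ge0 //.
by rewrite (_ : f n x - f n z = (f n x - f n y) + (f n y - f n z)) ?ler_normD //; ring.
Qed.

Lemma sep_dist_eq0 x y : sep_dist x y = 0 <-> x = y.
Proof.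
split=> [dxy|<-]; last first.
  apply/eqP; rewrite eq_le sep_dist_ge0 andbT sep_dist_le // => n.
  by rewrite /sep_term subrr normr0 mul0r.
apply: contrapT => /f_sep [n [fx0 fy1]].
have := sep_term_le_dist x y n; rewrite dxy /sep_term fx0 fy1 sub0r normrN normr1 mul1r.
by rewrite invr_le0 lern0.
Qed.

(* Only finitely many terms can be large, and each of them is continuous. *)
Lemma sep_dist_nbhs x e : 0 < e -> nbhs x [set y | sep_dist x y < e].
Proof.
move=> e0; have e20 : 0 < e / 2 by rewrite divr_gt0.
have [N hN] := ltr_add_invr e20; rewrite add0r in hN.
have near_f n : \forall y \near x, `|f n x - f n y| < e / 2.
  by move: (f_cont n x) => /cvgrPdist_lt /(_ (e / 2) e20).
have near_fN : \forall y \near x, forall n, (n <= N)%N -> `|f n x - f n y| < e / 2.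
  elim: N {hN} => [|N IH].
    by apply: filterS (near_f 0%N) => y hy n; rewrite leqn0 => /eqP ->.
  apply: filterS (filterI IH (near_f N.+1)) => y [h1 h2] n.
  by rewrite leq_eqVlt => /orP[/eqP ->//|]; rewrite ltnS; exact: h1.
apply: filterS near_fN => y hy /=; apply: (@le_lt_trans _ _ (e / 2)); last by lra.
apply: sep_dist_le => n; case: (leqP n N) => hn.
  exact/ltW/(le_lt_trans (sep_term_le_norm x y n) (hy n hn)).
apply/ltW/(le_lt_trans (sep_term_le_inv x y n))/(le_lt_trans _ hN).
by rewrite lef_pV2 ?posrE ?ltr0Sn // ler_nat ltnS ltnW.
Qed.

(* By compactness of the complement of W, finitely many of the open sets
   [1/(n+1) < sep_dist x _] cover it, hence so does one of them. *)
Lemma sep_dist_ball_sub W x : compact [set: T] -> open W -> W x ->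
  exists2 e, 0 < e & [set y | sep_dist x y < e] `<=` W.
Proof.
move=> cT oW Wx.
have cW : compact (~` W).
  by rewrite -[~` W]setTI; apply: compact_closedI => //; rewrite closedC.
have /(compact_near_coveringP _).1 := cW.
move=> /(_ nat \oo (fun n y => n.+1%:R^-1 < sep_dist x y) _).
case=> [y nWy|N _ hN].
  have c0 : 0 < sep_dist x y / 2.
    rewrite divr_gt0 // lt_neqAle sep_dist_ge0 andbT eq_sym.
    by apply/eqP => /sep_dist_eq0 xy; apply: nWy; rewrite -xy.
  have [M hM] := ltr_add_invr c0; rewrite add0r in hM.
  exists ([set y' | sep_dist y y' < sep_dist x y / 2], [set n | (M <= n)%N]).
    by split; [exact: sep_dist_nbhs | exists M].
  case=> y' n [/= yy' Mn]; apply: le_lt_trans (_ : n.+1%:R^-1 <= M.+1%:R^-1) _.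
    by rewrite lef_pV2 ?posrE ?ltr0Sn // ler_nat.
  apply: lt_trans hM _; have := sep_dist_triangle x y' y; rewrite (sep_dist_sym y' y); lra.
exists N.+1%:R^-1; first by rewrite invr_gt0.
move=> y /= xy; apply: contrapT => nWy.
by have := hN N (leqnn N) y nWy; rewrite ltNge (ltW xy).
Qed.

Lemma sep_dist_metric : compact [set: T] -> metric_inducing sep_dist.
Proof.
move=> cT; split; [exact: sep_dist_ge0|exact: sep_dist_eq0|exact: sep_dist_sym|
  exact: sep_dist_triangle|].
move=> W; split=> [oW x|balls]; first exact: sep_dist_ball_sub.
rewrite openE => x /balls [e e0 sub]; apply: filterS sub _; exact: sep_dist_nbhs.
Qed.

End separating_sequence.

Lemma rel_open_setT {T : Type} (tau : set (set T)) (W : set T) :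
  rel_open tau setT W <-> tau W.
Proof. by split=> [[O [tO ->]]|tW]; [rewrite setTI | exists W; rewrite setTI]. Qed.

Lemma hausdorff_inS {T : Type} (tau : set (set T)) (A B : set T) :
  A `<=` B -> hausdorff_in tau B -> hausdorff_in tau A.
Proof.
move=> AB hausB a b Aa Ab ab.
have [O1 [O2 [oO1 [oO2 [O1a [O2b O12]]]]]] := hausB a b (AB a Aa) (AB b Ab) ab.
exists O1, O2; do 4!split=> //.
by apply/seteqP; split=> // x [[/AB Bx O1x] O2x]; rewrite -O12.
Qed.

Lemma metrizableTP (T : topologicalType) :
  metrizable_in (@open T) setT <-> exists d : T -> T -> Rdefinitions.R, metric_inducing d.
Proof.
split=> -[d hd]; exists d.
  have [d0 [deq [dsym [dtri dopen]]]] := hd.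
  split=> [x y|x y|x y|x y z|W]; [exact/RleP/d0|exact: deq|exact: dsym|exact/RleP/dtri|].
  rewrite -rel_open_setT dopen //; split=> h x /h [e /RltP e0 sub]; exists e => // y.
    by move=> /RltP dy; apply: sub.
  by case=> _ /RltP dy; apply: sub.
have [d0 deq dsym dtri dopen] := hd.
split=> [x y _ _|]; first exact/RleP/d0.
split=> [x y _ _|]; first exact: deq.
split=> [x y _ _|]; first exact: dsym.
split=> [x y z _ _ _|W _]; first exact/RleP/dtri.
rewrite rel_open_setT dopen; split=> h x /h [e e0 sub]; exists e.
- exact/RltP.
- by move=> y [_ /RltP dy]; apply: sub.
- exact/RltP/e0.
- by move=> y /RltP dy; apply: sub.
Qed.

Lemma separating_seq_of_network {R : realType} (T : topologicalType) (J : countType)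
    (N : J -> set T) :
  normal_space T -> hausdorff_space T -> (forall j, closed (N j)) -> network N setT ->
  exists f : nat -> T -> R, [/\ forall n, continuous (f n), forall n x, 0 <= f n x <= 1 &
    forall x y, x <> y -> exists n, f n x = 0 /\ f n y = 1].
Proof.
move=> normT hausT closedN netN.
exists (fun n => if unpickle n is Some ij then Urysohn (N ij.1) (N ij.2) else cst 0); split.
- by move=> n; case: unpickle => [ij|]; [exact: Urysohn_continuous | move=> x; exact: cvg_cst].
- move=> n x; case: unpickle => [ij|]; last by rewrite lexx ler01.
  have := @Urysohn_range T R (N ij.1) (N ij.2) _ (ex_intro2 _ _ x I erefl).
  by rewrite /= in_itv.
move=> x y /eqP xy; move: hausT; rewrite open_hausdorff => /(_ x y xy).
case=> -[O1 O2] /= [/set_mem O1x /set_mem O2y] [oO1 oO2 /eqP O12].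
have [i [Nix NiO1]] := netN x O1 I oO1 O1x.
have [j [Njy NjO2]] := netN y O2 I oO2 O2y.
have Nij : N i `&` N j = set0.
  by apply/seteqP; split=> // z [/NiO1 O1z /NjO2 O2z]; rewrite -O12.
exists (pickle (i, j)); rewrite pickleK /=.
have sepij := normal_uniform_separator normT (closedN i) (closedN j) Nij.
by split; [apply: (Urysohn_sub0 sepij); exists x | apply: (Urysohn_sub1 sepij); exists y].
Qed.

(* Urysohn functions separating the pairs of members of the network embed the
   space into the Hilbert cube, whose metric is [sep_dist]. *)
Lemma network_metrizable (T : topologicalType) (J : countType) (N : J -> set T) :
  compact [set: T] -> hausdorff_space T -> (forall j, closed (N j)) -> network N setT ->
  metrizable_in (@open T) setT.
Proof.
move=> cT hausT closedN netN; have normT := compact_normal hausT cT.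
have [f [f_cont f01 f_sep]] :=
  @separating_seq_of_network Rdefinitions.R _ _ N normT hausT closedN netN.
by apply/metrizableTP; exists (sep_dist f); exact: sep_dist_metric.
Qed.

Section metric_inducing_balls.
Context {R : realType} {T : topologicalType} {d : T -> T -> R} (d_metric : metric_inducing d).

Lemma ball_open x r : open [set y | d x y < r].
Proof.
have [_ _ _ dtri ->] := d_metric; move=> y /= xy.
exists (r - d x y); first by rewrite subr_gt0.
by move=> z /= yz; have := dtri x y z; lra.
Qed.

Lemma closed_ball_closed x r : closed [set y | d x y <= r].
Proof.
have [_ _ dsym dtri dopen] := d_metric.
rewrite -openC dopen => y /= /negP; rewrite -ltNge => xy.
exists (d x y - r); first by rewrite subr_gt0.
by move=> z /= yz; have := dtri x z y; rewrite (dsym z y) => ? /=; lra.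
Qed.

End metric_inducing_balls.

Section set_type_topology.
Context {X : topologicalType} {A : set X}.

Lemma compact_set_type (B : set X) :
  compact B -> B `<=` A -> compact (set_val @^-1` B : set (set_type A)).
Proof.
move=> cB BA F FF FB.
have [x [Bx clx]] := cB (set_val @ F) _ FB.
exists (exist _ x (mem_set (BA x Bx))); split => // E V FE.
rewrite nbhsE => -[W [[O oO <-] Ox] WV].
have [_ [[e Ee <-] Oe]] := clx (set_val @` E) O (filterS (@preimage_image _ _ _ _) FE)
  (open_nbhs_nbhs (conj oO Ox)).
by exists e; split => //; apply: WV.
Qed.

Lemma hausdorff_set_type : hausdorff_in (@open X) A -> hausdorff_space (set_type A).
Proof.
move=> hausA; rewrite open_hausdorff => a b ab.
have [|O1 [O2 [oO1 [oO2 [O1a [O2b O12]]]]]] := hausA _ _ (set_mem (valP a)) (set_mem (valP b)).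
  by move=> /val_inj abE; rewrite abE eqxx in ab.
exists (set_val @^-1` O1, set_val @^-1` O2); first by split; apply/mem_set.
split; [by exists O1|by exists O2|].
apply/eqP/seteqP; split=> // c [c1 c2].
have : (A `&` O1 `&` O2) (set_val c) by split; [split; [exact/set_mem/valP|]|].
by rewrite O12.
Qed.

Lemma metrizable_in_of_set_type (B : set X) :
  metrizable_in (@open (set_type A)) setT -> B `<=` A -> metrizable_in (@open X) B.
Proof.
case/metrizableTP => d d_metric BA; have [d0 deq dsym dtri dopen] := d_metric.
pose d' (x y : X) := if @insub _ _ (set_type A) x is Some a then
  if insub y is Some b then d a b else 0 else 0.
have d'E (a b : set_type A) : d' (val a) (val b) = d a b by rewrite /d' !valK.
have lift x : B x -> exists a : set_type A, x = val a.
  by move=> Bx; exists (exist _ x (mem_set (BA x Bx))).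
exists d'; split=> [x y /lift[a ->] /lift[b ->]|]; first by rewrite d'E; exact/RleP.
split=> [x y /lift[a ->] /lift[b ->]|]; first by rewrite d'E deq; split=> [->|/val_inj].
split=> [x y /lift[a ->] /lift[b ->]|]; first by rewrite !d'E.
split=> [x y z /lift[a ->] /lift[b ->] /lift[c ->]|W WB]; first by rewrite !d'E; exact/RleP.
split=> [[O [oO ->]] x [/lift[a ->] Oa]|W_balls].
  have [|e e0 sub] := (dopen (set_val @^-1` O)).1 _ a Oa; first by exists O.
  exists e; first exact/RltP.
  move=> y [By]; have [b yb] := lift y By.
  rewrite yb d'E => /RltP/sub Ob; split; [by rewrite -yb | exact: Ob].
have {}W_balls x : W x -> exists2 e, 0 < e & [set y | B y /\ d' x y < e] `<=` W.
  by move=> /W_balls [e /RltP e0 sub]; exists e => // y [By /RltP dy]; apply: sub.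
pose V := \bigcup_(x in W) \bigcup_(e in [set e | 0 < e /\
  [set y | B y /\ d' x y < e] `<=` W]) [set b : set_type A | d' x (val b) < e].
have [O oO VO] : open V.
  apply: bigcup_open => x /WB /lift[a ->]; apply: bigcup_open => e _.
  by under eq_set do rewrite d'E; exact: ball_open.
exists O; split => //; apply/seteqP; split=> [x Wx|y [By Oy]].
  have [a xa] := lift x (WB x Wx); split; first exact: WB.
  have : V a.
    have [e e0 sub] := W_balls x Wx; exists x => //; exists e; first by split.
    by rewrite /= xa d'E (deq a a).2.
  by rewrite -VO xa.
have [b yb] := lift y By.
have : V b by rewrite -VO; move: Oy; rewrite yb.
by case=> x Wx [e [_ sub] xb]; apply: sub; split => //; rewrite yb.
Qed.

End set_type_topology.

(* [N (n, m)] is the closed ball of radius [1/(m+1)] about the point of [D]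
   with code [n] (if any), cut down to [C]. *)
Lemma compact_network {R : realType} (Y : topologicalType) (d : Y -> Y -> R) (C : set Y) :
  metric_inducing d -> separable_in (@open Y) setT -> compact C ->
  exists N : nat * nat -> set Y, [/\ forall j, compact (N j), forall j, N j `<=` C & network N C].
Proof.
move=> d_metric [D [_ [/countable_injP [g g_inj] D_dense]]] cC.
have [_ deq dsym dtri dopen] := d_metric.
pose N (j : nat * nat) :=
  C `&` [set w | exists2 x, D x /\ g x = j.1 & d x w <= j.2.+1%:R^-1].
exists N; split=> [[n m]|j w []//|a O Ca oO Oa].
  have [[x [Dx gx]]|gn] := pselect (exists x, D x /\ g x = n); last first.
    have -> : N (n, m) = set0 by apply/seteqP; split=> // w [_ [x ? _]]; apply: gn; exists x.
    exact: compact0.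
  have -> : N (n, m) = C `&` [set w | d x w <= m.+1%:R^-1].
    apply/seteqP; split=> w [Cw]; last by split=> //; exists x.
    case=> x' [Dx' gx'] dw; split=> //.
    by rewrite -(g_inj x' x) ?inE //; rewrite gx gx'.
  exact: compact_closedI cC (closed_ball_closed d_metric x _).
have [e e0 sub] := (dopen O).1 oO a Oa.
have [m me] : exists m, m.+1%:R^-1 < e / 2.
  by have [m] := ltr_add_invr (divr_gt0 e0 (ltr0Sn _ 1)); rewrite add0r; exists m.
have [x0 [/= ax0 Dx0]] : ([set w | d a w < m.+1%:R^-1] `&` D) !=set0.
  apply: D_dense; first exact/rel_open_setT/(ball_open d_metric).
  by exists a; rewrite /= (deq a a).2 // invr_gt0.
exists (g x0, m); split; first by split=> //; exists x0 => //; rewrite dsym ltW.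
move=> w [_ [x [Dx /(g_inj x x0 (mem_set Dx) (mem_set Dx0)) ->] x0w]]; apply: sub => /=.
apply: le_lt_trans (dtri a x0 w) _; rewrite [e]splitr.
exact: ltr_leD (lt_trans ax0 me) (ltW (le_lt_trans x0w me)).
Qed.

Section bigcup_image.
Context {X : topologicalType} {I : finType} {Y : I -> topologicalType} {h : forall i, Y i -> X}.
Hypothesis h_cont : forall i, continuous (h i).

Lemma separable_bigcup_image (V : forall i, set (Y i)) :
  (forall i, open (V i)) -> (forall i, separable_in (@open (Y i)) setT) ->
  separable_in (@open X) (\bigcup_(i in setT) h i @` V i).
Proof.
move=> oV sepY; have [D hD] := all_sig (fun i => cid (sepY i)).
exists (\bigcup_(i in setT) h i @` (D i `&` V i)); split; [|split].
- by move=> _ [i _ [y [_ Vy] <-]]; exists i => //; exists y.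
- apply: bigcup_countable => [|i _]; first exact: countableP.
  have [_ [cD _]] := hD i.
  exact: card_le_trans (card_image_le _ _) (card_le_trans (subset_card_le (@subIsetl _ _ _)) cD).
move=> _ [O [oO ->]] [_ [[i _ [y Vy <-]] Ohy]].
have [_ [_ D_dense]] := hD i.
have [|y' [[Vy' Ohy'] Dy']] := D_dense (V i `&` h i @^-1` O) _ (ex_intro _ y (conj Vy Ohy)).
  by apply/rel_open_setT/openI; [exact: oV | exact: (continuousP _).1 (h_cont i) _ oO].
by exists (h i y'); split; [split=> //; exists i => //; exists y' | exists i => //; exists y'].
Qed.

Lemma compact_bigcup_image (C : forall i, set (Y i)) :
  (forall i, compact (C i)) -> compact (\bigcup_(i in setT) h i @` C i).
Proof.
move=> cC; have -> : \bigcup_(i in setT) h i @` C i = \big[setU/set0]_(i <- enum I) h i @` C i.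
  by rewrite -bigcup_seq; congr bigcup; apply/seteqP; split=> i //= _; rewrite mem_enum.
apply: bigsetU_compact => i _; apply: continuous_compact (cC i).
exact: continuous_subspaceT (h_cont i).
Qed.

Lemma metrizable_bigcup_image (C : forall i, set (Y i)) (N : forall i, nat * nat -> set (Y i)) :
  (forall i, compact (C i)) -> (forall i j, compact (N i j)) -> (forall i j, N i j `<=` C i) ->
  (forall i, network (N i) (C i)) -> hausdorff_in (@open X) (\bigcup_(i in setT) h i @` C i) ->
  metrizable_in (@open (set_type (\bigcup_(i in setT) h i @` C i))) setT.
Proof.
set K := \bigcup_(i in setT) h i @` C i => cC cN NC netN hausK.
have hausT := hausdorff_set_type hausK.
pose M (ij : I * (nat * nat)) : set (set_type K) := set_val @^-1` (h ij.1 @` N ij.1 ij.2).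
have cT : compact [set: set_type K].
  suff -> : [set: set_type K] = set_val @^-1` K.
    by apply: compact_set_type => //; exact: compact_bigcup_image.
  by apply/seteqP; split=> // k _; exact: set_mem (valP k).
apply: (@network_metrizable _ _ M cT hausT).
  move=> [i j]; apply: compact_closed hausT _; apply: compact_set_type.
    exact: continuous_compact (continuous_subspaceT (h_cont i)) (cN i j).
  by move=> _ [a /NC Ca <-]; exists i => //; exists a.
move=> k _ _ [O oO <-] /=; have := set_mem (valP k); case=> i _ [a Ca ka] Ok.
have Oha : (h i @^-1` O) a by rewrite /= ka.
have [j [Nja NjO]] := netN i a _ Ca ((continuousP _).1 (h_cont i) _ oO) Oha.
exists (i, j); split=> [|k' [b /NjO Ob kb]]; first by exists a.
by rewrite /= -kb.
Qed.

End bigcup_image.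

(* The carrier is the whole of [set {p : P & U p}]; only the classes
   [gcs_cls _] matter, since openness is tested on them alone. *)
Definition gcs_space (disp : Order.disp_t) (P : finPOrderType disp) (U : P -> topologicalType)
  (Ud : forall p q : P, set (U q)) (phi : forall p q : P, U q -> U p) := set {p : P & U p}.

Section gcs_space.
Context (disp : Order.disp_t) (P : finPOrderType disp) (U : P -> topologicalType)
  (Ud : forall p q : P, set (U q)) (phi : forall p q : P, U q -> U p).
Local Notation qopen := (gcs_qopen disp P U Ud phi).

Lemma gcs_qopenT : qopen setT.
Proof. by move=> p; exact: openT. Qed.

Lemma gcs_qopenI : setI_closed qopen.
Proof. by move=> O1 O2 oO1 oO2 p; exact: openI. Qed.

Lemma gcs_qopen_bigcup (J : Type) (O : J -> set (set {p : P & U p})) :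
  (forall j, qopen (O j)) -> qopen (\bigcup_j O j).
Proof. by move=> oO p; apply: bigcup_open => j _; exact: oO. Qed.

End gcs_space.

HB.instance Definition _ disp P U Ud phi := Choice.on (gcs_space disp P U Ud phi).
HB.instance Definition _ disp P U Ud phi :=
  isOpenTopological.Build (gcs_space disp P U Ud phi) (gcs_qopenT disp P U Ud phi)
    (@gcs_qopenI disp P U Ud phi) (@gcs_qopen_bigcup disp P U Ud phi).

Lemma gcs_cls_continuous (disp : Order.disp_t) (P : finPOrderType disp)
    (U : P -> topologicalType) (Ud : forall p q : P, set (U q))
    (phi : forall p q : P, U q -> U p) (p : P) :
  continuous (fun a : U p => gcs_cls disp P U Ud phi (existT _ p a) : gcs_space disp P U Ud phi).
Proof. by apply/continuousP => O oO; exact: oO. Qed.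

Lemma gcs_openE (disp : Order.disp_t) (P : finPOrderType disp)
    (U : P -> topologicalType) (Ud : forall p q : P, set (U q))
    (phi : forall p q : P, U q -> U p) :
  gcs_qopen disp P U Ud phi = @open (gcs_space disp P U Ud phi).
Proof. by []. Qed.

Local Close Scope ring_scope.

Theorem proposition2p11 (X : topologicalType) (disp : Order.disp_t)
  (P : finPOrderType disp) (U : P -> topologicalType)
  (S : forall p : P, set (U p)) (psi : forall p : P, U p -> X)
  (Ud : forall p q : P, set (U q)) (phi : forall p q : P, U q -> U p)
  (Z : set X) (U' : forall p : P, set (U p)) :
  lcsm X -> compact Z ->
  gcs_strong X disp P U S psi Ud phi Z ->
  (forall p : P, open (U' p) /\ compact (closure (U' p))) ->
  separable_in (gcs_qopen disp P U Ud phi) (gcs_union_image disp P U Ud phi U') /\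
  metrizable_in (gcs_qopen disp P U Ud phi) (gcs_union_image disp P U Ud phi U').
Proof.
move=> _ _ [[charts _] [_ quot_haus]] U'_reg.
have U_lcsm p : lcsm (U p) by case: (charts p).
have cls_cont := gcs_cls_continuous disp P U Ud phi.
rewrite gcs_openE /gcs_union_image; split.
  apply: (separable_bigcup_image cls_cont) => p; first by case: (U'_reg p).
  by case: (U_lcsm p) => _ [].
have netU p : exists N : nat * nat -> set (U p),
    [/\ forall j, compact (N j), forall j, N j `<=` closure (U' p) & network N (closure (U' p))].
  have [_ [sepU /metrizableTP [d d_metric]]] := U_lcsm p.
  exact: compact_network d_metric sepU (U'_reg p).2.
have [N hN] := all_sig (fun p => cid (netU p)).
apply: (metrizable_in_of_set_type _
  (metrizable_bigcup_image cls_cont (fun p => closure (U' p)) N _ _ _ _ _)).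
- by move=> p; case: (U'_reg p).
- by move=> p; case: (hN p).
- by move=> p; case: (hN p).
- by move=> p; case: (hN p).
- by apply: hausdorff_inS quot_haus => _ [p _ [a _ <-]]; exists (existT _ p a).
- by move=> _ [p _ [a U'a <-]]; exists p => //; exists a => //; exact: subset_closure.
Qed.
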